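(* Assume the standing setting below. Let $\alpha\in(0,1/6]$, $\gamma\in(\alpha,1-2\alpha]$ with $\alpha n,\gamma n$ integers, let $P_1,P_2,P_3\subseteq X$ be pairwise disjoint with $|P_1|=|P_2|=\alpha n$ and $|P_3|=\gamma n$, let $T\subseteq X$ be nonempty, let $\tau>0$, and set $\psi:=\frac1{3\alpha}R_{2\alpha(k+1)\phi_\alpha}(P_2,T)$. Let $F_c:=\mathrm{far}_{4(k+1)\phi_\alpha}(X\setminus P_1,T)$, let $\mathcal{B}_c$ be a $(\phi_\alpha/3)$-linear bin division of $(X\setminus P_1)\setminus F_c$ with respect to $T$, and let $F_d:=\mathrm{far}_{5(k+1)\phi_\alpha}(X\setminus P_1,T)$. Suppose each of $F_c$ and $\mathcal{B}_c$ is trivial or well-represented in $P_2$ for $X\setminus P_1$, and $F_d$ is trivial or well-represented in $P_3$ for $X\setminus P_1$. Let $N:=|\{x\in P_3:\rho(x,T)>\psi/(k\tau)\}|$. Then $$N\le 8(k+1)\phi_\alpha\frac{\gamma}{1-\alpha}+9k\tau.$$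
   Context: Standing setting: $(X,\rho)$ is a finite metric space with $|X|=n$; $k\ge2$ is an integer and $\delta\in(0,1)$; $\log$ is the natural logarithm; for $\alpha>0$, $\phi_\alpha:=150\log(32k/\delta)/\alpha$. For nonempty $T\subseteq X$, $\rho(x,T):=\min_{y\in T}\rho(x,y)$ and $R(S,T):=\sum_{x\in S}\rho(x,T)$; ties are broken by a fixed ordering of $X$. For $S\subseteq X$ and real $r\ge0$, $\mathrm{far}_r(S,T)$ is the set of the $\lceil r\rceil$ points of $S$ furthest from $T$; if $|S|<r$, $\mathrm{far}_r(S,T):=S$ (trivial far set). $R_r(S,T):=R(S\setminus\mathrm{far}_r(S,T),T)$. For finite $W$, $A,B\subseteq W$, $B$ is well-represented in $A$ for $W$ if $|B\cap A|/|B|\in[r/2,\frac32 r]$ with $r=|A|/|W|$; a bin division is well-represented if all its bins are. A $z$-linear bin division ($z>0$) of $W$ with respect to $T$ is a partition $(\mathcal{B}(1),\ldots,\mathcal{B}(L))$ of $W$ with: (1) if $z\le|W|$, $|\mathcal{B}(i)|\ge z(i+1)/2$ for all $i$; otherwise it is trivial, $\mathcal{B}(1):=W$; (2) $|\mathcal{B}(1)|\le\frac52 z$; (3) $|\mathcal{B}(i+1)|/|\mathcal{B}(i)|\le3/2$; (4) $\rho(x,T)\ge\rho(x',T)$ whenever $x\in\mathcal{B}(i)$, $x'\in\mathcal{B}(i+1)$. *)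

From mathcomp Require Import all_boot all_order all_algebra.
From mathcomp Require Import reals exp.
Set Implicit Arguments. Unset Strict Implicit. Unset Printing Implicit Defensive.
Import Order.TTheory GRing.Theory Num.Theory.
Local Open Scope ring_scope.

Section Defs.
Variables (R : realType) (X : finType) (rho : X -> X -> R).

Definition is_metric : Prop :=
  [/\ forall x y, 0 <= rho x y,
      forall x y, rho x y = 0 <-> x = y,
      forall x y, rho x y = rho y x &
      forall x y z, rho x z <= rho x y + rho y z].

(* rho(x,T) = min_{y in T} rho(x,y)  (T nonempty; 0 by convention if T empty) *)
Definition distT (T : {set X}) (x : X) : R :=
  if [pick y in T] is Some y0 then \big[Num.min/rho x y0]_(y in T) rho x y else 0.

Definition Rcost (S T : {set X}) : R := \sum_(x in S) distT T x.

Definition further (T : {set X}) (y x : X) : bool :=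
  (distT T x < distT T y) ||
  ((distT T y == distT T x) && (enum_rank y < enum_rank x)%N).

(* far_r(S,T): the ceil(r) points of S furthest from T (S itself if |S| < r) *)
Definition far (r : R) (S T : {set X}) : {set X} :=
  if (#|S|%:R < r) then S
  else [set x in S | (#|[set y in S | further T y x]|%:Z < Num.ceil r)%R].

Definition far_trivial (r : R) (S : {set X}) : bool := #|S|%:R < r.

Definition Rr (r : R) (S T : {set X}) : R := Rcost (S :\: far r S T) T.

Definition well_rep (W A B : {set X}) : Prop :=
  let r : R := #|A|%:R / #|W|%:R in
  r / 2 <= #|B :&: A|%:R / #|B|%:R <= 3 / 2 * r.

Definition well_rep_div (W A : {set X}) (B : seq {set X}) : Prop :=
  forall b, b \in B -> well_rep W A b.

(* z-linear bin division (B(1),...,B(L)) = (nth set0 B 0, ..., nth set0 B (L-1)) *)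
Definition is_linear_bin_division (z : R) (W T : {set X}) (B : seq {set X}) : Prop :=
  [/\ (0 < size B)%N,
      \bigcup_(b <- B) b = W &
      forall i j, (i < j < size B)%N -> [disjoint nth set0 B i & nth set0 B j]] /\
  [/\ (z <= #|W|%:R -> forall i, (i < size B)%N ->
          z * (i.+2)%:R / 2 <= #|nth set0 B i|%:R),
      (#|W|%:R < z -> B = [:: W]),
      #|nth set0 B 0|%:R <= 5 / 2 * z,
      (forall i, (i.+1 < size B)%N ->
          #|nth set0 B i.+1|%:R / #|nth set0 B i|%:R <= 3 / 2 :> R) &
      (forall i x x', (i.+1 < size B)%N -> x \in nth set0 B i ->
          x' \in nth set0 B i.+1 -> distT T x' <= distT T x)].

Definition bin_div_trivial (z : R) (W : {set X}) : bool := #|W|%:R < z.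

End Defs.

Definition phi (R : realType) (k : nat) (delta alpha : R) : R :=
  150 * ln (32 * k%:R / delta) / alpha.

Arguments far_trivial {R X} r S.
Arguments bin_div_trivial {R X} z W.
Arguments well_rep R {X} W A B.
Arguments well_rep_div R {X} W A B.

From mathcomp Require Import all_boot all_order all_algebra.
From mathcomp Require Import reals exp.
From mathcomp Require Import zify ring lra.
Import Order.TTheory GRing.Theory Num.Theory.
Local Open Scope ring_scope.

(* Write W = X \ P1, D = psi/(k tau) and split the counted points along the far
   set F_d.  Those inside F_d number at most |F_d ∩ P3| <= 8(k+1)phi |P3|/|W| by
   well-representation of F_d in P3 (or |P3| itself is that small when F_d is
   trivial).  Suppose more than 9k tau of them lie outside F_d.  Then all of F_d
   lies beyond D, so W \ F_c contains about (k+1)phi + 9k tau points beyond D.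
   The bins of the linear bin division preceding the first bin that reaches
   within D of T cover two thirds of these, and by well-representation of these
   bins and of F_c in P2 we find more than 3 alpha k tau + |far| points of P2
   beyond D, where |far| is the size of the far set discarded in
   R_{2 alpha (k+1) phi}(P2,T) = 3 alpha psi = 3 alpha k tau D: a contradiction. *)

Set Implicit Arguments. Unset Strict Implicit. Unset Printing Implicit Defensive.

Lemma ceil_nat (R : realType) (r : R) : 0 <= r ->
  exists m : nat, [/\ Num.ceil r = m%:Z, r <= m%:R & m%:R < r + 1].
Proof.
move=> r0; have z0 : 0 <= Num.ceil r by rewrite ceil_ge0; lra.
exists `|Num.ceil r|%N; have e := gez0_abs z0.
have e2 : (`|Num.ceil r|%N)%:R = (Num.ceil r)%:~R :> R by rewrite -{2}e.
split => //; rewrite e2; first exact: ceil_ge.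
by have := ceilB1_lt r; rewrite intrB /=; lra.
Qed.

Lemma distT_ge0 (R : realType) (X : finType) (rho : X -> X -> R) T x :
  is_metric rho -> 0 <= distT rho T x.
Proof.
case=> rho_ge0 _ _ _; rewrite /distT; case: pickP => // y _.
by elim/big_ind: _ => // a b ha hb; rewrite le_min ha hb.
Qed.

(* Ranking the points of S by the strict total order [further], the
   nontrivial far set far_r(S,T) is the set of the ceil(r) top-ranked points; this
   yields its size bounds, its monotonicity in r, and the fact that it dominates
   every other point of S in distance to T. *)
Section FarSets.
Variables (R : realType) (X : finType) (rho : X -> X -> R) (T : {set X}).
Local Notation d := (distT rho T).
Local Notation fur := (further rho T).

Lemma further_irrefl x : ~~ fur x x.
Proof. by rewrite /further ltxx eqxx ltnn. Qed.

Lemma further_trans a b c : fur a b -> fur b c -> fur a c.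
Proof.
rewrite /further => /orP[h1|/andP[/eqP e1 h1]] /orP[h2|/andP[/eqP e2 h2]].
- by rewrite (lt_trans h2 h1).
- by rewrite -e2 h1.
- by rewrite e1 h2.
- by rewrite e1 -e2 eqxx (ltn_trans h1 h2) orbT.
Qed.

Lemma further_total a b : a != b -> fur a b || fur b a.
Proof.
move=> ab; rewrite /further; case: (ltgtP (d a) (d b)) => //= _.
by rewrite -neq_ltn; apply: contra ab => /eqP/val_inj/enum_rank_inj ->.
Qed.

Definition rank_in (S : {set X}) x := #|[set y in S | fur y x]|.

Local Notation top S m := [set x in S | (rank_in S x < m)%N].

Lemma rank_in_lt (S : {set X}) x y : x \in S -> fur x y -> (rank_in S x < rank_in S y)%N.
Proof.
move=> xS fxy; apply: proper_card; apply/properP; split.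
  by apply/subsetP => z; rewrite !inE => /andP[-> h]; exact: further_trans h fxy.
by exists x; rewrite !inE ?xS ?fxy // (negbTE (further_irrefl _)) andbF.
Qed.

Lemma card_top_le (S : {set X}) m : (#|top S m| <= m)%N.
Proof.
case: (set_0Vmem (top S m)) => [->|[x0 x0L]]; first by rewrite cards0.
case: (@arg_maxnP _ x0 (mem (top S m)) (rank_in S) x0L) => x1 x1L hmax.
have {}x1L : x1 \in top S m := x1L.
move: (x1L); rewrite inE => /andP[x1S x1m].
suff : (#|top S m| <= (rank_in S x1).+1)%N by move/leq_trans; apply.
rewrite (cardsD1 x1) x1L add1n ltnS; apply: subset_leq_card.
apply/subsetP => y; rewrite !inE => /andP[nyx /andP[yS ym]]; rewrite yS /=.
case/orP: (further_total nyx) => // h.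
have : (rank_in S y <= rank_in S x1)%N.
  by apply: hmax; change (y \in top S m); rewrite inE yS ym.
by have := rank_in_lt x1S h; lia.
Qed.

Lemma card_top_ge (S : {set X}) m : (m <= #|S|)%N -> (m <= #|top S m|)%N.
Proof.
move=> mS; rewrite leqNgt; apply/negP => small.
have [x0 x0D] : exists x, x \in S :\: top S m.
  apply/set0Pn; rewrite -card_gt0 cardsD.
  have : (#|S :&: top S m| <= #|top S m|)%N by apply/subset_leq_card/subsetIr.
  lia.
case: (@arg_minnP _ x0 (mem (S :\: top S m)) (rank_in S) x0D) => x1 x1D hmin.
have {}x1D : x1 \in S :\: top S m := x1D.
move: (x1D); rewrite !inE => /andP[nl x1S]; rewrite x1S /= -leqNgt in nl.
suff : (rank_in S x1 <= #|top S m|)%N by lia.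
apply: subset_leq_card; apply/subsetP => y; rewrite !inE => /andP[yS fy].
rewrite yS /=; apply: contraT; rewrite -leqNgt => ym.
have := hmin y; rewrite !inE yS -leqNgt ym => /(_ isT).
by have := rank_in_lt yS fy; lia.
Qed.

Lemma top_order (S : {set X}) m x y :
  x \in top S m -> y \in S -> y \notin top S m -> d y <= d x.
Proof.
rewrite !inE => /andP[xS xm] yS; rewrite yS /= -leqNgt => my.
rewrite leNgt; apply/negP => h.
have : fur y x by rewrite /further h.
by move/(rank_in_lt yS); lia.
Qed.

Lemma far_top (r : R) (S : {set X}) : 0 <= r -> ~~ (#|S|%:R < r) ->
  exists m : nat, [/\ far rho r S T = top S m, Num.ceil r = m%:Z,
                      r <= m%:R, m%:R < r + 1 & (m <= #|S|)%N].
Proof.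
move=> r0 nt; have [m [e h1 h2]] := ceil_nat r0.
exists m; split => //.
  by rewrite /far (negbTE nt) e; apply/setP => x; rewrite !inE ltz_nat.
have rS : r <= #|S|%:R by rewrite leNgt.
have : Num.ceil r <= (#|S|)%:Z by rewrite ceil_le_int; exact: rS.
by rewrite e lez_nat.
Qed.

Lemma far_sub r (S : {set X}) : far rho r S T \subset S.
Proof.
by rewrite /far; case: ifP => _ //; apply/subsetP => x; rewrite inE => /andP[].
Qed.

Lemma far_card_le r (S : {set X}) : 0 <= r -> #|far rho r S T|%:R <= r + 1.
Proof.
move=> r0; case: (boolP (#|S|%:R < r)) => h; first by rewrite /far h; lra.
have [m [-> _ _ mr _]] := far_top r0 h.
by apply: le_trans (ltW mr); rewrite ler_nat; exact: card_top_le.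
Qed.

Lemma far_card_ge r (S : {set X}) : 0 <= r -> ~~ (#|S|%:R < r) ->
  r <= #|far rho r S T|%:R.
Proof.
move=> r0 h; have [m [-> _ rm _ mS]] := far_top r0 h.
by apply: le_trans rm _; rewrite ler_nat; exact: card_top_ge.
Qed.

Lemma far_order r (S : {set X}) x y : 0 <= r -> x \in far rho r S T -> y \in S ->
  y \notin far rho r S T -> d y <= d x.
Proof.
move=> r0; case: (boolP (#|S|%:R < r)) => h; first by rewrite /far h => _ ->.
by have [m [-> _ _ _ _]] := far_top r0 h; exact: top_order.
Qed.

Lemma far_mono r1 r2 (S : {set X}) : 0 <= r1 -> r1 <= r2 -> ~~ (#|S|%:R < r2) ->
  far rho r1 S T \subset far rho r2 S T.
Proof.
move=> r10 r12 h2.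
have h1 : ~~ (#|S|%:R < r1) by move: h2; rewrite -!leNgt => h; lra.
have [m1 [-> e1 _ _ _]] := far_top r10 h1.
have [m2 [-> e2 _ _ _]] := far_top (le_trans r10 r12) h2.
have : Num.ceil r1 <= Num.ceil r2 by apply: le_ceil.
rewrite e1 e2 lez_nat => m12.
by apply/subsetP => x; rewrite !inE => /andP[-> xm]; exact: leq_trans xm m12.
Qed.

Lemma Rr_gt (r D : R) (P S : {set X}) : is_metric rho -> 0 <= r -> 0 <= D ->
  S \subset P -> {in S, forall x, D < d x} -> r + 1 < #|S|%:R ->
  (#|S|%:R - (r + 1)) * D < Rr rho r P T.
Proof.
move=> hm r0 D0 SP SD big.
set Sr := S :\: far rho r P T.
have cSr : #|S|%:R - (r + 1) <= #|Sr|%:R.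
  have := cardsID (far rho r P T) S; rewrite -/Sr => e.
  have : (#|S :&: far rho r P T| <= #|far rho r P T|)%N by apply/subset_leq_card/subsetIr.
  rewrite -(ler_nat R); have := far_card_le P r0.
  by move: e => /(congr1 (fun n => n%:R : R)); rewrite natrD; lra.
have [x1 x1S] : exists x, x \in Sr by apply/set0Pn; rewrite -card_gt0 -(ltr0n R); lra.
apply: le_lt_trans (_ : #|Sr|%:R * D < _).
  by apply: ler_wpM2r.
apply: lt_le_trans (_ : \sum_(x in Sr) d x <= _).
  rewrite mulr_natl -sumr_const; apply: ltr_sum.
    by apply/hasP; exists x1 => //; rewrite mem_index_enum.
  by move=> x; rewrite inE => /andP[_ /SD].
rewrite /Rr /Rcost [X in _ <= X](big_setID Sr) /= (setIidPr (setSD _ SP)) lerDl.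
by apply: sumr_ge0 => x _; exact: distT_ge0.
Qed.

Lemma Rr_ge0 r P : is_metric rho -> 0 <= Rr rho r P T.
Proof. by move=> hm; apply: sumr_ge0 => x _; exact: distT_ge0. Qed.

End FarSets.

Lemma card_beyond_split (X : finType) (p : pred X) (W S F G : {set X}) :
  S \subset W -> G \subset W -> F \subset G -> {in S, forall x, p x} ->
  {in G, forall x, p x} -> (#|S :\: G| + #|G :\: F| <= #|[set x in W :\: F | p x]|)%N.
Proof.
move=> SW GW FG pS pG.
have disj : [disjoint S :\: G & G :\: F].
  by rewrite -setI_eq0; apply/eqP/setP => x; rewrite !inE; case: (x \in G); rewrite ?andbF.
have := (leq_card_setU (S :\: G) (G :\: F)).2; rewrite disj => /eqP <-.
apply/subset_leq_card/subsetP => x; rewrite !inE.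
case/orP => [/andP[xG xS]|/andP[xF xG]].
  rewrite (subsetP SW _ xS) pS // !andbT.
  by apply: contra xG; exact: (subsetP FG).
by rewrite xF (subsetP GW _ xG) pG.
Qed.

Lemma well_rep_bounds (R : realType) (X : finType) (W A B : {set X}) :
  well_rep R W A B -> (0 < #|A|)%N -> (0 < #|W|)%N ->
  [/\ (0 < #|B|)%N,
      (#|A|%:R / #|W|%:R) / 2 * #|B|%:R <= #|B :&: A|%:R :> R &
      #|B :&: A|%:R <= 3 / 2 * (#|A|%:R / #|W|%:R) * #|B|%:R :> R].
Proof.
rewrite /well_rep => /andP[lo hi] A0 W0.
have rp : 0 < #|A|%:R / #|W|%:R :> R by apply: divr_gt0; rewrite ltr0n.
have B0 : (0 < #|B|)%N.
  by rewrite lt0n; apply/negP => /eqP e; move: lo; rewrite e invr0 mulr0; lra.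
have Bp : 0 < #|B|%:R :> R by rewrite ltr0n.
by split => //; [rewrite -ler_pdivlMr | rewrite -ler_pdivrMr].
Qed.

(* Let j be the first
   bin containing a point within distance D of T.  The bins before j lie entirely
   beyond D and form a set U; by the ordering of the bins every point of W beyond
   D lies in U or in bin j, and by the growth condition |B(j)| <= |U|/2 + (5/2)z.
   Well-representation of every bin in P (for a reference set Y) then puts a
   proportional share of U into P. *)
Section BinDivision.
Variables (R : realType) (X : finType) (rho : X -> X -> R) (T : {set X}).
Variables (z D : R) (W Y P : {set X}) (Bc : seq {set X}).
Hypotheses (hdiv : is_linear_bin_division rho z W T Bc)
  (hrep : well_rep_div R Y P Bc) (P0 : (0 < #|P|)%N) (Y0 : (0 < #|Y|)%N).
Local Notation d := (distT rho T).
Local Notation B i := (nth set0 Bc i).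
Local Notation share := (#|P|%:R / #|Y|%:R : R).

Lemma bins_cover : \bigcup_(b <- Bc) b = W.
Proof. by case: hdiv => [[]]. Qed.

Lemma bins_disjoint i j : (i < j < size Bc)%N -> [disjoint B i & B j].
Proof. by case: hdiv => [[_ _ hdisj] _]; apply: hdisj. Qed.

Lemma bin0_card : #|B 0|%:R <= 5 / 2 * z.
Proof. by case: hdiv => _ []. Qed.

Lemma bin_order i x x' : (i.+1 < size Bc)%N -> x \in B i -> x' \in B i.+1 -> d x' <= d x.
Proof. by case: hdiv => _ [_ _ _ _ hord]; apply: hord. Qed.

Lemma bin_nonempty i : (i < size Bc)%N -> (0 < #|B i|)%N.
Proof. by move=> hi; have [] := well_rep_bounds (hrep (mem_nth set0 hi)) P0 Y0. Qed.

Lemma bin_growth i : (i.+1 < size Bc)%N -> #|B i.+1|%:R <= 3 / 2 * #|B i|%:R :> R.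
Proof.
move=> hi; case: hdiv => _ [_ _ _ hratio _].
have Bi0 : 0 < #|B i|%:R :> R by rewrite ltr0n; exact/bin_nonempty/ltnW.
by have := hratio _ hi; rewrite ler_pdivrMr.
Qed.

Lemma bin_share i : (i < size Bc)%N -> share / 2 * #|B i|%:R <= #|B i :&: P|%:R.
Proof. by move=> hi; have [] := well_rep_bounds (hrep (mem_nth set0 hi)) P0 Y0. Qed.

Definition prefix_bins j : {set X} := [set x | has (fun i => x \in B i) (iota 0 j)].
Definition prefix_size j : R := \sum_(0 <= i < j) #|B i|%:R.

Lemma prefix_binsP x j : reflect (exists2 i, (i < j)%N & x \in B i) (x \in prefix_bins j).
Proof.
rewrite inE; apply: (iffP hasP) => [[i]|[i hi xi]].
  by rewrite mem_iota add0n => /andP[_ h] xi; exists i.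
by exists i => //; rewrite mem_iota add0n.
Qed.

Lemma prefix_binsS j : prefix_bins j.+1 = prefix_bins j :|: B j.
Proof. by apply/setP => x; rewrite !inE -addn1 iotaD has_cat /= orbF. Qed.

Lemma prefix_sizeS j : prefix_size j.+1 = prefix_size j + #|B j|%:R.
Proof. by rewrite /prefix_size big_nat_recr. Qed.

Lemma prefix_size_ge0 j : 0 <= prefix_size j.
Proof. by apply: sumr_ge0 => i _; apply: ler0n. Qed.

Lemma card_prefix_bins j : #|prefix_bins j|%:R <= prefix_size j.
Proof.
elim: j => [|j IH].
  by rewrite /prefix_size big_geq // (_ : prefix_bins 0 = set0) ?cards0 //; apply/setP => x; rewrite !inE.
rewrite prefix_binsS prefix_sizeS; apply: le_trans (lerD IH (lexx _)).
by rewrite -natrD ler_nat (leq_card_setU _ _).1.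
Qed.

Lemma prefix_share j : (j <= size Bc)%N -> share / 2 * prefix_size j <= #|prefix_bins j :&: P|%:R.
Proof.
elim: j => [|j IH] hj; first by rewrite /prefix_size big_geq // mulr0.
rewrite prefix_binsS prefix_sizeS setIUl cardsU.
have -> : prefix_bins j :&: P :&: (B j :&: P) = set0.
  apply/setP => x; rewrite !in_setI in_set0; apply/negP.
  case/andP=> /andP[/prefix_binsP[i hi xi] _] /andP[xj _].
  by have := bins_disjoint (i:=i) (j:=j); rewrite hi hj => /(_ isT) /disjointFr /(_ xi); rewrite xj.
rewrite cards0 subn0 natrD mulrDr; apply: lerD; first exact/IH/ltnW.
exact: bin_share.
Qed.

Lemma prefix_bins_all : prefix_bins (size Bc) = W.
Proof.
apply/setP => x; rewrite -bins_cover bigcup_seq; apply/prefix_binsP/bigcupP.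
  by case=> i hi xi; exists (B i) => //; exact: mem_nth.
by case=> b /(nthP set0)[i hi <-] xi; exists i.
Qed.

Lemma prefix_bins_sub j : prefix_bins j \subset W.
Proof.
rewrite -prefix_bins_all; apply/subsetP => x /prefix_binsP[i hi xi].
case: (ltnP i (size Bc)) => his; first by apply/prefix_binsP; exists i.
by rewrite nth_default // inE in xi.
Qed.

Lemma bin_card_bound j : (j < size Bc)%N -> #|B j|%:R <= prefix_size j / 2 + 5 / 2 * z.
Proof.
elim: j => [|j IH] hj; first by rewrite /prefix_size big_geq // mul0r add0r bin0_card.
have := IH (ltnW hj); have := bin_growth hj; rewrite prefix_sizeS; lra.
Qed.

Definition first_near := find (fun b : {set X} => [exists y in b, d y <= D]) Bc.

Lemma before_first_near i x : (i < first_near)%N -> x \in B i -> D < d x.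
Proof.
move=> hi xi; have := before_find set0 hi.
by move/negbT/existsPn/(_ x); rewrite xi -ltNge.
Qed.

Lemma after_first_near i x : (first_near < i < size Bc)%N -> x \in B i -> d x <= D.
Proof.
case/andP; elim: i x => // i IH x hji hi xi.
have his : (i < size Bc)%N by apply: ltnW.
move: hji; rewrite ltnS leq_eqVlt => /orP[/eqP eji|lt_ji]; last first.
  have /card_gt0P[y yB] := bin_nonempty his.
  by apply: le_trans (IH y lt_ji his yB); exact: bin_order xi.
rewrite -eji in hi xi his; have := nth_find set0 (a := fun b : {set X} => [exists y in b, d y <= D]) (s := Bc).
rewrite has_find his => /(_ isT) /existsP[y /andP[yB yD]].
by apply: le_trans yD; exact: bin_order xi.
Qed.

Lemma card_beyond_prefix :
  #|[set x in W | D < d x]|%:R <= 3 / 2 * prefix_size first_near + 5 / 2 * z.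
Proof.
have z0 : 0 <= 5 / 2 * z by apply: le_trans bin0_card; apply: ler0n.
have s0 := prefix_size_ge0 first_near.
have beyond_sub : [set x in W | D < d x] \subset W by apply/subsetP => x; rewrite inE => /andP[].
case: (ltnP first_near (size Bc)) => hj; last first.
  have e : first_near = size Bc by apply/eqP; rewrite eqn_leq hj find_size.
  have := card_prefix_bins (size Bc); rewrite prefix_bins_all -e.
  by have := subset_leq_card beyond_sub; rewrite -(ler_nat R); lra.
have : #|[set x in W | D < d x]|%:R <= prefix_size first_near.+1.
  apply: le_trans (card_prefix_bins _); rewrite ler_nat; apply: subset_leq_card.
  apply/subsetP => x; rewrite inE => /andP[]; rewrite -prefix_bins_all.
  move=> /prefix_binsP[i hi xi] Dx; case: (ltnP first_near i) => hji.
    by move: (after_first_near (i:=i)); rewrite hji hi => /(_ _ isT xi); rewrite leNgt Dx.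
  by apply/prefix_binsP; exists i.
by have := bin_card_bound hj; rewrite prefix_sizeS; lra.
Qed.

Lemma bin_transfer : 0 <= share -> exists2 U : {set X}, U \subset W &
  {in U, forall x, D < d x} /\
  share / 3 * (#|[set x in W | D < d x]|%:R - 5 / 2 * z) <= #|U :&: P|%:R.
Proof.
move=> sh0; exists (prefix_bins first_near); first exact: prefix_bins_sub.
split; first by move=> x /prefix_binsP[i hi xi]; exact: before_first_near xi.
apply: le_trans (prefix_share (find_size _ _)).
have := card_beyond_prefix; set C := #|_|%:R => hC.
have : share * (C - 5 / 2 * z) <= share * (3 / 2 * prefix_size first_near).
  by apply: ler_wpM2l => //; lra.
lra.
Qed.

End BinDivision.

(* A crude lower bound on the logarithm, from exp(-y) >= 1 - y. *)
Lemma ln_ge_half (R : realType) (x : R) : 2 <= x -> 1 / 2 <= ln x.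
Proof.
move=> x2; have e : sequences.expR (ln x) = x by apply: lnK; rewrite posrE; lra.
have := expR_ge1Dx (- ln x); rewrite expRN e.
have : x^-1 <= 2^-1 by rewrite lef_pV2 ?posrE //; lra.
lra.
Qed.

Lemma phi_bounds (R : realType) (k : nat) (delta alpha : R) :
  (2 <= k)%N -> 0 < delta -> delta < 1 -> 0 < alpha -> alpha <= 1 / 6 ->
  75 <= alpha * phi k delta alpha /\ 450 <= phi k delta alpha.
Proof.
move=> k2 d0 d1 a0 a6.
have kk2 : 2 <= k%:R :> R by rewrite (ler_nat R 2 k).
have lnb : 1 / 2 <= ln (32 * k%:R / delta).
  by apply: ln_ge_half; rewrite ler_pdivlMr //; lra.
have aph : alpha * phi k delta alpha = 150 * ln (32 * k%:R / delta).
  by rewrite /phi; field; rewrite lt0r_neq0.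
have aph75 : 75 <= alpha * phi k delta alpha by lra.
split => //; have ph0 : 0 < phi k delta alpha.
  rewrite ltNge; apply/negP => h.
  have : alpha * phi k delta alpha <= 0 by rewrite pmulr_rle0.
  lra.
have : alpha * phi k delta alpha <= 1 / 6 * phi k delta alpha by rewrite ler_wpM2r // ltW.
lra.
Qed.

Section Lemma9.
Variables (R : realType) (X : finType) (rho : X -> X -> R) (k : nat)
  (delta alpha gamma tau : R) (P1 P2 P3 T : {set X}) (Bc : seq {set X}).

Local Notation d := (distT rho T).
Local Notation ph := (phi k delta alpha).
Local Notation W := (~: P1).
Local Notation psi := (1 / (3 * alpha) * Rr rho (2 * alpha * (k.+1)%:R * ph) P2 T).
Local Notation D := (psi / (k%:R * tau)).
Local Notation Fc := (far rho (4 * (k.+1)%:R * ph) W T).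
Local Notation Fd := (far rho (5 * (k.+1)%:R * ph) W T).
Local Notation NS := [set x in P3 | D < d x].

Hypotheses (hmetric : is_metric rho) (k2 : (2 <= k)%N) (delta0 : 0 < delta) (delta1 : delta < 1)
  (alpha0 : 0 < alpha) (alpha_le : alpha <= 1 / 6) (alpha_lt_gamma : alpha < gamma)
  (dis13 : [disjoint P1 & P3])
  (card1 : #|P1|%:R = alpha * #|X|%:R) (card2 : #|P2|%:R = alpha * #|X|%:R)
  (card3 : #|P3|%:R = gamma * #|X|%:R) (T0 : T != set0) (tau0 : 0 < tau)
  (hbins : is_linear_bin_division rho (ph / 3) (W :\: Fc) T Bc)
  (hFc : far_trivial (4 * (k.+1)%:R * ph) W \/ well_rep R W P2 Fc)
  (hBc : bin_div_trivial (ph / 3) (W :\: Fc) \/ well_rep_div R W P2 Bc)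
  (hFd : far_trivial (5 * (k.+1)%:R * ph) W \/ well_rep R W P3 Fd).

Lemma card_W : #|W|%:R = (1 - alpha) * #|X|%:R.
Proof.
have : (#|P1| + #|W|)%:R = #|X|%:R :> R by rewrite cardsC.
by rewrite natrD card1; lra.
Qed.

Lemma card_X_gt0 : 0 < #|X|%:R :> R.
Proof. by case/set0Pn: T0 => t _; rewrite ltr0n; apply/card_gt0P; exists t. Qed.

Lemma W_gt0 : (0 < #|W|)%N.
Proof. by rewrite -(ltr0n R) card_W mulr_gt0 //; [have := alpha_le; lra | exact: card_X_gt0]. Qed.

Lemma P2_gt0 : (0 < #|P2|)%N.
Proof. by rewrite -(ltr0n R) card2 mulr_gt0 //; exact: card_X_gt0. Qed.

Lemma P3_gt0 : (0 < #|P3|)%N.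
Proof. by rewrite -(ltr0n R) card3 mulr_gt0 //; [exact: lt_trans alpha_lt_gamma | exact: card_X_gt0]. Qed.

Lemma P3_sub_W : P3 \subset W.
Proof. by rewrite -disjoints_subset disjoint_sym. Qed.

Lemma share_P2 : alpha <= #|P2|%:R / #|W|%:R.
Proof.
have n0 := card_X_gt0; have a0 := alpha0; have a6 := alpha_le.
rewrite card2 card_W (_ : _ / _ = alpha / (1 - alpha)); last first.
  by field; apply/andP; split; rewrite lt0r_neq0 //; lra.
rewrite ler_pdivlMr; [nra | lra].
Qed.

Lemma share_P3 : #|P3|%:R / #|W|%:R = gamma / (1 - alpha).
Proof.
have n0 := card_X_gt0; have a6 := alpha_le.
by rewrite card3 card_W; field; apply/andP; split; rewrite lt0r_neq0 //; lra.
Qed.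

Lemma gamma_share_gt0 : 0 < gamma / (1 - alpha).
Proof. by rewrite -share_P3 divr_gt0 // ltr0n; [exact: P3_gt0 | exact: W_gt0]. Qed.

(* (k+1) phi >= 3 phi, used to absorb additive constants. *)
Lemma kph_ge : 3 * ph <= (k.+1)%:R * ph.
Proof.
have [_ ph450] := phi_bounds k2 delta0 delta1 alpha0 alpha_le.
by apply: ler_wpM2r; [lra | rewrite (ler_nat R 3 k.+1)].
Qed.

(* If the far set F_d is trivial then |P3| < 5(k+1)phi |P3|/|W| already. *)
Lemma bound_Fd_trivial : far_trivial (5 * (k.+1)%:R * ph) W ->
  #|NS|%:R <= 8 * (k.+1)%:R * ph * (gamma / (1 - alpha)) + 9 * k%:R * tau.
Proof.
rewrite /far_trivial => small.
have [_ ph450] := phi_bounds k2 delta0 delta1 alpha0 alpha_le; have kph := kph_ge.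
have g0 := gamma_share_gt0; have kt0 : 0 <= 9 * k%:R * tau by rewrite !mulr_ge0 // ltW.
have NP3 : #|NS|%:R <= #|P3|%:R :> R.
  by rewrite ler_nat; apply/subset_leq_card/subsetP => x; rewrite inE => /andP[].
have : #|P3|%:R = gamma / (1 - alpha) * #|W|%:R.
  by rewrite -share_P3 divfK // pnatr_eq0 -lt0n W_gt0.
have : gamma / (1 - alpha) * #|W|%:R < gamma / (1 - alpha) * (5 * (k.+1)%:R * ph).
  by rewrite ltr_pM2l.
have : 0 <= gamma / (1 - alpha) * ((k.+1)%:R * ph) by rewrite mulr_ge0 // ?ltW //; lra.
lra.
Qed.

Lemma bound_Fd_P3 : ~~ far_trivial (5 * (k.+1)%:R * ph) W ->
  #|Fd :&: P3|%:R <= 8 * (k.+1)%:R * ph * (gamma / (1 - alpha)).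
Proof.
move=> nontriv; have wFd : well_rep R W P3 Fd by case: hFd => // h; rewrite h in nontriv.
have [_ ph450] := phi_bounds k2 delta0 delta1 alpha0 alpha_le; have kph := kph_ge.
have g0 := gamma_share_gt0.
have [_ _] := well_rep_bounds wFd P3_gt0 W_gt0; rewrite share_P3.
have : #|Fd|%:R <= 5 * (k.+1)%:R * ph + 1 by apply: far_card_le; lra.
move=> Fd_le hi; apply: le_trans hi _.
have : gamma / (1 - alpha) * #|Fd|%:R <= gamma / (1 - alpha) * (5 * (k.+1)%:R * ph + 1).
  by rewrite ler_wpM2l // ltW.
have : 0 <= gamma / (1 - alpha) * ((k.+1)%:R * ph - 3) by rewrite mulr_ge0 // ?ltW //; lra.
lra.
Qed.


(* F_c \subset F_d (when F_d is trivial it is all of W). *)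
Lemma Fc_sub_Fd : Fc \subset Fd.
Proof.
have [_ ph450] := phi_bounds k2 delta0 delta1 alpha0 alpha_le; have kph := kph_ge.
case: (boolP (far_trivial (5 * (k.+1)%:R * ph) W)) => [|nt]; last by apply: far_mono => //; lra.
by rewrite /far_trivial {2}/far => ->; apply: far_sub.
Qed.

(* Points beyond D outside F_c: those of P3 outside F_d, plus all of F_d \ F_c
   once F_d lies beyond D. *)
Lemma card_beyond_outside_Fc : {in Fd, forall y, D < d y} ->
  #|NS :\: Fd|%:R + #|Fd|%:R - #|Fc|%:R <= #|[set x in W :\: Fc | D < d x]|%:R :> R.
Proof.
move=> FdD; have FcFd := Fc_sub_Fd.
have NSW : NS \subset W.
  by apply: subset_trans P3_sub_W; apply/subsetP => x; rewrite inE => /andP[].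
have NSD : {in NS, forall x, D < d x} by move=> x; rewrite inE => /andP[].
have := card_beyond_split NSW (far_sub _ _ _ _) FcFd NSD FdD.
have := cardsID Fc Fd; rewrite (setIidPr FcFd) => <-.
by rewrite -(ler_nat R) !natrD; lra.
Qed.

Lemma Fd_beyond : (0 < #|NS :\: Fd|)%N -> {in Fd, forall y, D < d y}.
Proof.
have [_ ph450] := phi_bounds k2 delta0 delta1 alpha0 alpha_le; have kph := kph_ge.
case/card_gt0P => x0; rewrite !inE => /andP[x0Fd /andP[x0P3 x0D]] y yFd.
apply: lt_le_trans x0D _.
by apply: far_order yFd (subsetP P3_sub_W _ x0P3) x0Fd; lra.
Qed.

Lemma Fc_share : ~~ far_trivial (5 * (k.+1)%:R * ph) W ->
  [/\ 4 * (k.+1)%:R * ph <= #|Fc|%:R, #|Fc|%:R <= 4 * (k.+1)%:R * ph + 1 &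
      #|P2|%:R / #|W|%:R / 2 * #|Fc|%:R <= #|Fc :&: P2|%:R :> R].
Proof.
move=> hFdt; have [_ ph450] := phi_bounds k2 delta0 delta1 alpha0 alpha_le.
have kph := kph_ge.
have hFct : ~~ far_trivial (4 * (k.+1)%:R * ph) W.
  by move: hFdt; rewrite /far_trivial -!leNgt => h; lra.
have wFc : well_rep R W P2 Fc by case: hFc => // h; rewrite h in hFct.
have [_ FcP2 _] := well_rep_bounds wFc P2_gt0 W_gt0.
by split => //; [apply: far_card_ge => //; lra | apply: far_card_le; lra].
Qed.

Lemma beyond_in_P2 : ~~ far_trivial (5 * (k.+1)%:R * ph) W ->
  {in Fd, forall y, D < d y} ->
  ph / 3 <= #|[set x in W :\: Fc | D < d x]|%:R ->
  exists2 Q : {set X}, Q \subset P2 & {in Q, forall x, D < d x} /\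
    #|P2|%:R / #|W|%:R / 3 * (#|[set x in W :\: Fc | D < d x]|%:R - 5 / 2 * (ph / 3))
    + #|P2|%:R / #|W|%:R / 2 * #|Fc|%:R <= #|Q|%:R.
Proof.
move=> hFdt FdD; set C := [set x in W :\: Fc | D < d x] => C_ge.
have hbt : ~~ bin_div_trivial (ph / 3) (W :\: Fc).
  rewrite /bin_div_trivial -leNgt; apply: le_trans C_ge _; rewrite ler_nat.
  by apply/subset_leq_card/subsetP => x; rewrite inE => /andP[].
have wB : well_rep_div R W P2 Bc by case: hBc => // h; rewrite h in hbt.
have sh0 : 0 <= #|P2|%:R / #|W|%:R :> R by rewrite divr_ge0.
have [U UW [UD hU]] := bin_transfer D hbins wB P2_gt0 W_gt0 sh0.
have [_ _ FcP2] := Fc_share hFdt.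
exists ((U :&: P2) :|: (Fc :&: P2)).
  by apply/subsetP => x; rewrite !inE => /orP[] /andP[].
split.
  move=> x; rewrite !inE => /orP[] /andP[xUF _]; first exact: UD.
  exact/FdD/(subsetP Fc_sub_Fd).
have disj : [disjoint U :&: P2 & Fc :&: P2].
  rewrite -setI_eq0; apply/eqP/setP => x; rewrite !inE.
  by apply/negP => /andP[/andP[/(subsetP UW) + _] /andP[+ _]]; rewrite inE => /andP[/negPf ->].
have := (leq_card_setU (U :&: P2) (Fc :&: P2)).2; rewrite disj => /eqP ->.
by rewrite natrD; apply: lerD.
Qed.

(* The core estimate: if more than 9 k tau points of P3 outside F_d lie beyond
   D, then P2 contains a set Q of points beyond D exceeding 3 alpha k tau plus
   the size of the far set discarded from P2 in psi. *)
Lemma many_beyond_in_P2 : ~~ far_trivial (5 * (k.+1)%:R * ph) W ->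
  9 * k%:R * tau < #|NS :\: Fd|%:R ->
  exists2 Q : {set X}, Q \subset P2 & {in Q, forall x, D < d x} /\
    3 * alpha * (k%:R * tau) + (2 * alpha * (k.+1)%:R * ph + 1) < #|Q|%:R.
Proof.
move=> hFdt big.
have [aph ph450] := phi_bounds k2 delta0 delta1 alpha0 alpha_le.
have kph := kph_ge; have a0 := alpha0; have sh := share_P2.
have kt0 : 0 <= 9 * k%:R * tau by rewrite !mulr_ge0 // ltW.
have FdD : {in Fd, forall y, D < d y} by apply: Fd_beyond; rewrite -(ltr0n R); lra.
have [Fc_ge Fc_le _] := Fc_share hFdt.
have Fd_ge : 5 * (k.+1)%:R * ph <= #|Fd|%:R by apply: far_card_ge => //; lra.
have hC := card_beyond_outside_Fc FdD.
set C := [set x in W :\: Fc | D < d x] in hC *.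
have C_ge : ph / 3 <= #|C|%:R by lra.
have [Q QP2 [QD hQ]] := beyond_in_P2 hFdt FdD C_ge.
exists Q => //; split => //.
have p1 : alpha * (#|C|%:R - 5 / 2 * (ph / 3)) <= #|P2|%:R / #|W|%:R * (#|C|%:R - 5 / 2 * (ph / 3)).
  by apply: ler_wpM2r => //; lra.
have p2 : alpha * #|Fc|%:R <= #|P2|%:R / #|W|%:R * #|Fc|%:R by apply: ler_wpM2r.
have p3 : alpha * (#|NS :\: Fd|%:R + #|Fd|%:R - #|Fc|%:R) <= alpha * #|C|%:R.
  by apply: ler_wpM2l => //; exact: ltW.
have p4 : alpha * (9 * k%:R * tau) < alpha * #|NS :\: Fd|%:R by rewrite ltr_pM2l.
have p5 : alpha * (5 * (k.+1)%:R * ph) <= alpha * #|Fd|%:R by rewrite ler_pM2l.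
have p6 : alpha * (4 * (k.+1)%:R * ph) <= alpha * #|Fc|%:R by rewrite ler_pM2l.
have p7 : 3 * (alpha * ph) <= alpha * ((k.+1)%:R * ph) by rewrite mulrCA ler_pM2l.
lra.
Qed.

(* The set Q of many_beyond_in_P2 would push R_r(P2,T) = 3 alpha k tau D above
   itself; hence at most 9 k tau points of P3 outside F_d lie beyond D. *)
Lemma tail_bound : ~~ far_trivial (5 * (k.+1)%:R * ph) W ->
  #|NS :\: Fd|%:R <= 9 * k%:R * tau.
Proof.
move=> hFdt; rewrite leNgt; apply/negP => /(many_beyond_in_P2 hFdt)[Q QP2 [QD bigQ]].
have [aph ph450] := phi_bounds k2 delta0 delta1 alpha0 alpha_le.
have a0 := alpha0; have kph := kph_ge.
have kt0 : 0 < k%:R * tau by rewrite mulr_gt0 // ltr0n; exact: leq_trans k2.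
have Rr0 : 0 <= Rr rho (2 * alpha * (k.+1)%:R * ph) P2 T := Rr_ge0 _ _ _ hmetric.
have D0 : 0 <= D.
  by apply: divr_ge0; [apply: mulr_ge0 => //; rewrite divr_ge0 //; lra | exact: ltW].
have r0 : 0 <= 2 * alpha * (k.+1)%:R * ph by rewrite -mulrA mulr_ge0 //; lra.
have eRr : Rr rho (2 * alpha * (k.+1)%:R * ph) P2 T = 3 * alpha * (k%:R * tau) * D.
  by field; rewrite !lt0r_neq0 // ltr0n; exact: ltn_trans k2.
have Q_big : 2 * alpha * (k.+1)%:R * ph + 1 < #|Q|%:R.
  have : 0 <= 3 * alpha * (k%:R * tau) by rewrite mulr_ge0 ?ltW //; lra.
  lra.
have Rr_lt := Rr_gt hmetric r0 D0 QP2 QD Q_big.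
have : 3 * alpha * (k%:R * tau) * D <= (#|Q|%:R - (2 * alpha * (k.+1)%:R * ph + 1)) * D.
  by apply: ler_wpM2r => //; lra.
lra.
Qed.

Lemma lemma9_bound :
  #|NS|%:R <= 8 * (k.+1)%:R * ph * (gamma / (1 - alpha)) + 9 * k%:R * tau.
Proof.
case: (boolP (far_trivial (5 * (k.+1)%:R * ph) W)) => hFdt.
  exact: bound_Fd_trivial.
have : (#|NS :&: Fd| <= #|Fd :&: P3|)%N.
  by apply/subset_leq_card/subsetP => x; rewrite !inE => /andP[/andP[-> _] ->].
rewrite -(ler_nat R) -(cardsID Fd NS) natrD.
have := bound_Fd_P3 hFdt; have := tail_bound hFdt; lra.
Qed.

End Lemma9.

Unset Implicit Arguments. Set Strict Implicit.

Theorem lemma9 (R : realType) (X : finType) (rho : X -> X -> R)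
  (k : nat) (delta alpha gamma tau : R)
  (P1 P2 P3 T : {set X}) (Bc : seq {set X}) :
  is_metric rho ->
  (2 <= k)%N ->
  0 < delta < 1 ->
  0 < alpha <= 1 / 6 ->
  alpha < gamma <= 1 - 2 * alpha ->
  (exists a : nat, alpha * #|X|%:R = a%:R) ->
  (exists c : nat, gamma * #|X|%:R = c%:R) ->
  [disjoint P1 & P2] -> [disjoint P1 & P3] -> [disjoint P2 & P3] ->
  #|P1|%:R = alpha * #|X|%:R ->
  #|P2|%:R = alpha * #|X|%:R ->
  #|P3|%:R = gamma * #|X|%:R ->
  T != set0 ->
  0 < tau ->
  let ph := phi k delta alpha in
  let psi := 1 / (3 * alpha) * Rr rho (2 * alpha * (k.+1)%:R * ph) P2 T in
  let Fc := far rho (4 * (k.+1)%:R * ph) (~: P1) T in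
  let Fd := far rho (5 * (k.+1)%:R * ph) (~: P1) T in
  is_linear_bin_division rho (ph / 3) ((~: P1) :\: Fc) T Bc ->
  (far_trivial (4 * (k.+1)%:R * ph) (~: P1) \/ well_rep R (~: P1) P2 Fc) ->
  (bin_div_trivial (ph / 3) ((~: P1) :\: Fc) \/ well_rep_div R (~: P1) P2 Bc) ->
  (far_trivial (5 * (k.+1)%:R * ph) (~: P1) \/ well_rep R (~: P1) P3 Fd) ->
  let N := #|[set x in P3 | psi / (k%:R * tau) < distT rho T x]| in
  N%:R <= 8 * (k.+1)%:R * ph * (gamma / (1 - alpha)) + 9 * k%:R * tau.
Proof.
move=> hm k2 /andP[d0 d1] /andP[a0 a6] /andP[ag _] _ _ _ d13 _ c1 c2 c3 Tn tau0.
move=> ph psi Fc Fd hbins hFc hBc hFd.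
exact: (lemma9_bound hm k2 d0 d1 a0 a6 ag d13 c1 c2 c3 Tn tau0 hbins hFc hBc hFd).
Qed.
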